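(* Let $F$ be a field and let $I\subseteq F_{\mathbb{Z}_2^2}\{X\}$ be the graded $T$-ideal generated by \begin{align*} (ab)v=v(ba), &\quad g(v)\ne 0,\ g(a)=g(b)\ne 0;\\ ((ax)b)v=v((ba)x), &\quad g(v)\ne 0,\ g(x)=0,\ g(a)=g(b)\ne 0;\\ v((ax)b)=((ba)x)v, &\quad g(v)\ne 0,\ g(x)=0,\ g(a)=g(b)\ne 0;\\ x\circ y=0, &\quad \langle g(x),g(y)\rangle=\mathbb{Z}_2^2;\\ (vb)a=v(ab), &\quad g(v)\notin\langle g(a),g(b)\rangle;\\ a(vb)=v(ba), &\quad \langle g(v),g(b)\rangle=\mathbb{Z}_2^2,\ g(a)=0;\\ (va)w+(wa)v=-(v\circ w)a, &\quad g(a)\ne 0,\ g(v),g(w)\notin\langle g(a)\rangle;\\ (va)(wb)+(wa)(vb)=-(v\circ w)(ba), &\quad g(a)\neq 0,\ g(v),g(w)\notin\langle g(a),g(b)\rangle;\\ (x,y,z)=0, &\quad |\langle g(x),g(y),g(z)\rangle|\le 2;\\ [x,y]=0, &\quad g(x)=g(y)=0, \end{align*} and write $p\equiv q$ for $p-q\in I$. Let $U$ be the subalgebra of $F_{\mathbb{Z}_2^2}\{X\}$ generated by all variables of nonzero degree, and let ${}^*:U\to U$ be the linear map defined on monomials by $x^*=-x$ for each variable $x$ (of nonzero degree) and $(vw)^*=w^*v^*$. Let $f\in U$ and let $x$ be a variable of nonzero degree. Then: (1) ${}^*$ is an involution of $U$ (an anti-automorphism of order $2$); (2) if $f_0=0$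 then $f^*\equiv -f$; (3) if $f=v\cdot w$ with $v,w\in U$ homogeneous and $g(v)=g(w)\neq0$, then $f^*\equiv w\cdot v$; (4) if $f_{g(x)}=0$ then $fx\equiv xf^*$; (5) under any graded evaluation of the variables in the $\mathbb{Z}_2^2$-graded octonion algebra $\mathbb{O}=\mathbf{C}(\mu,\beta,\gamma)$, the value of $f^*$ is the conjugate $\overline{f}$ of the value of $f$.
   Context: $\mathbb{Z}_2^2$ is written additively. $F_G\{X\}$: free nonassociative algebra on variables $x_i^a$ ($a\in G$), graded by $g(x_i^a)=a$, $g(uv)=g(u)g(v)$; for $f$ and $h\in G$, $f_h$ denotes the homogeneous component of $f$ of degree $h$. A graded $T$-ideal is an ideal invariant under all graded endomorphisms (variables sent to elements of the same degree). $[x,y]=xy-yx$, $x\circ y=xy+yx$, $(x,y,z)=(xy)z-x(yz)$. Octonions: Cayley–Dickson process $(A,\alpha)=A\oplus A$, $(a_1,a_2)(a_3,a_4)=(a_1a_3+\alpha a_4\bar a_2,\bar a_1a_4+a_3a_2)$, $\overline{(a_1,a_2)}=(\bar a_1,-a_2)$, graded $(A,\alpha)_{(h,0)}=A_h\oplus0$, $(A,\alpha)_{(h,1)}=0\oplus A_h$; $\mathbf{K}(\mu)=F\oplus Fv_1$ with $(a+bv_1)(c+dv_1)=ac+\mu bd+(ad+bc+bd)v_1$, $\overline{a+bv_1}=(a+b)-bv_1$, $4\mu+1\ne0$, trivially graded; $\mathbf{C}(\mu,\beta,\gamma)=((\mathbf{K}(\mu),\beta),\gamma)$, $\beta,\gamma\ne0$.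 A graded evaluation substitutes each variable by an element of $\mathbb{O}$ of the same degree. *)

From mathcomp Require Import all_boot all_algebra.
Set Implicit Arguments. Unset Strict Implicit. Unset Printing Implicit Defensive.
Import GRing.Theory.
Local Open Scope ring_scope.

Definition G : Type := (bool * bool)%type.
Definition g0 : G := (false, false).
Definition gadd (a b : G) : G := (xorb a.1 b.1, xorb a.2 b.2).

(* list of the elements of the subgroup <s> generated by s (sums of subsets) *)
Fixpoint gspan (s : seq G) : seq G :=
  match s with
  | [::] => [:: g0]
  | a :: s' => gspan s' ++ map (gadd a) (gspan s')
  end.

Inductive mono : Type :=
| Leaf of nat & G
| Node of mono & mono.

Fixpoint deg (m : mono) : G :=
  match m with
  | Leaf _ a => a
  | Node m1 m2 => gadd (deg m1) (deg m2)
  end.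

Inductive term (F : Type) : Type :=
| Var of nat & G
| Zero
| Add of term F & term F
| Scal of F & term F
| Mul of term F & term F.
Arguments Var {F} _ _.
Arguments Zero {F}.

Section Free.
Variable F : fieldType.

(* coefficient of a monomial: the element of the free algebra denoted by a term
   is its coefficient function mono -> F (finitely supported). *)
Fixpoint coeff (t : term F) (m : mono) : F :=
  match t with
  | Var i a => match m with
               | Leaf j b => if (i == j) && (a == b) then 1 else 0
               | Node _ _ => 0
               end
  | Zero => 0
  | Add s u => coeff s m + coeff u m
  | Scal c s => c * coeff s m
  | Mul s u => match m with
               | Leaf _ _ => 0
               | Node m1 m2 => coeff s m1 * coeff u m2
               end
  end.

Definition Opp (t : term F) : term F := Scal (-1) t.
Definition Sub (s t : term F) : term F := Add s (Opp t).
Definition circ (s t : term F) : term F := Add (Mul s t) (Mul t s).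
Definition comm (s t : term F) : term F := Sub (Mul s t) (Mul t s).
Definition assoc (x y z : term F) : term F := Sub (Mul (Mul x y) z) (Mul x (Mul y z)).

Definition hcomp (t : term F) (h : G) : mono -> F :=
  fun m => if deg m == h then coeff t m else 0.

Definition homog (t : term F) (h : G) : Prop :=
  forall m, coeff t m <> 0 -> deg m = h.

Fixpoint termU (t : term F) : Prop :=
  match t with
  | Var _ a => a != g0
  | Zero => True
  | Add s u => termU s /\ termU u
  | Scal _ s => termU s
  | Mul s u => termU s /\ termU u
  end.

Fixpoint star (t : term F) : term F :=
  match t with
  | Var i a => Opp (Var i a)
  | Zero => Zero
  | Add s u => Add (star s) (star u)
  | Scal c s => Scal c (star s)
  | Mul s u => Mul (star u) (star s)
  end.

(* graded endomorphisms: substitution of variables by elements of the same degree *)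
Fixpoint subst (sigma : nat -> G -> term F) (t : term F) : term F :=
  match t with
  | Var i a => sigma i a
  | Zero => Zero
  | Add s u => Add (subst sigma s) (subst sigma u)
  | Scal c s => Scal c (subst sigma s)
  | Mul s u => Mul (subst sigma s) (subst sigma u)
  end.

Definition graded_subst (sigma : nat -> G -> term F) : Prop :=
  forall i a, homog (sigma i a) a.

Inductive gen : term F -> Prop :=
| gen1 iv gv ia ib ga :
    gv != g0 -> ga != g0 ->
    gen (Sub (Mul (Mul (Var ia ga) (Var ib ga)) (Var iv gv))
             (Mul (Var iv gv) (Mul (Var ib ga) (Var ia ga))))
| gen2 iv gv ix ia ib ga :
    gv != g0 -> ga != g0 ->
    gen (Sub (Mul (Mul (Mul (Var ia ga) (Var ix g0)) (Var ib ga)) (Var iv gv))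
             (Mul (Var iv gv) (Mul (Mul (Var ib ga) (Var ia ga)) (Var ix g0))))
| gen3 iv gv ix ia ib ga :
    gv != g0 -> ga != g0 ->
    gen (Sub (Mul (Var iv gv) (Mul (Mul (Var ia ga) (Var ix g0)) (Var ib ga)))
             (Mul (Mul (Mul (Var ib ga) (Var ia ga)) (Var ix g0)) (Var iv gv)))
| gen4 ix gx iy gy :
    (forall h : G, h \in gspan [:: gx; gy]) ->
    gen (Sub (circ (Var ix gx) (Var iy gy)) Zero)
| gen5 iv gv ia ga ib gb :
    gv \notin gspan [:: ga; gb] ->
    gen (Sub (Mul (Mul (Var iv gv) (Var ib gb)) (Var ia ga))
             (Mul (Var iv gv) (Mul (Var ia ga) (Var ib gb))))
| gen6 iv gv ia ib gb :
    (forall h : G, h \in gspan [:: gv; gb]) ->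
    gen (Sub (Mul (Var ia g0) (Mul (Var iv gv) (Var ib gb)))
             (Mul (Var iv gv) (Mul (Var ib gb) (Var ia g0))))
| gen7 iv gv iw gw ia ga :
    ga != g0 -> gv \notin gspan [:: ga] -> gw \notin gspan [:: ga] ->
    gen (Sub (Add (Mul (Mul (Var iv gv) (Var ia ga)) (Var iw gw))
                  (Mul (Mul (Var iw gw) (Var ia ga)) (Var iv gv)))
             (Opp (Mul (circ (Var iv gv) (Var iw gw)) (Var ia ga))))
| gen8 iv gv iw gw ia ga ib gb :
    ga != g0 -> gv \notin gspan [:: ga; gb] -> gw \notin gspan [:: ga; gb] ->
    gen (Sub (Add (Mul (Mul (Var iv gv) (Var ia ga)) (Mul (Var iw gw) (Var ib gb)))
                  (Mul (Mul (Var iw gw) (Var ia ga)) (Mul (Var iv gv) (Var ib gb))))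
             (Opp (Mul (circ (Var iv gv) (Var iw gw)) (Mul (Var ib gb) (Var ia ga)))))
| gen9 ix gx iy gy iz gz :
    (size (undup (gspan [:: gx; gy; gz])) <= 2)%N ->
    gen (Sub (assoc (Var ix gx) (Var iy gy) (Var iz gz)) Zero)
| gen10 ix iy :
    gen (Sub (comm (Var ix g0) (Var iy g0)) Zero).

(* Membership depends only on the
   element of the free algebra (constructor I_ext). *)
Inductive inI : term F -> Prop :=
| I_gen t : gen t -> inI t
| I_add s t : inI s -> inI t -> inI (Add s t)
| I_scal c t : inI t -> inI (Scal c t)
| I_mull s t : inI t -> inI (Mul s t)
| I_mulr s t : inI t -> inI (Mul t s)
| I_subst sigma t : graded_subst sigma -> inI t -> inI (subst sigma t)
| I_ext s t : coeff s =1 coeff t -> inI s -> inI t.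

Definition equivI (p q : term F) : Prop := inI (Sub p q).

Record CDops (A : Type) := mkCD {
  cd_zero : A; cd_add : A -> A -> A; cd_opp : A -> A;
  cd_scale : F -> A -> A; cd_mul : A -> A -> A; cd_conj : A -> A }.

Definition Kops (mu : F) : CDops (F * F) :=
  @mkCD (F * F) (0, 0)
    (fun x y => (x.1 + y.1, x.2 + y.2))
    (fun x => (- x.1, - x.2))
    (fun c x => (c * x.1, c * x.2))
    (fun x y => (x.1 * y.1 + mu * x.2 * y.2,
                 x.1 * y.2 + x.2 * y.1 + x.2 * y.2))
    (fun x => (x.1 + x.2, - x.2)).

Definition CD (A : Type) (o : CDops A) (alpha : F) : CDops (A * A) :=
  @mkCD (A * A) (cd_zero o, cd_zero o)
    (fun x y => (cd_add o x.1 y.1, cd_add o x.2 y.2))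
    (fun x => (cd_opp o x.1, cd_opp o x.2))
    (fun c x => (cd_scale o c x.1, cd_scale o c x.2))
    (fun x y => (cd_add o (cd_mul o x.1 y.1)
                          (cd_scale o alpha (cd_mul o y.2 (cd_conj o x.2))),
                 cd_add o (cd_mul o (cd_conj o x.1) y.2) (cd_mul o y.1 x.2)))
    (fun x => (cd_conj o x.1, cd_opp o x.2)).

Definition Oct : Type := (((F * F) * (F * F)) * ((F * F) * (F * F)))%type.

Definition Oops (mu beta gamma : F) : CDops Oct :=
  CD (CD (Kops mu) beta) gamma.

(* grading: O_(h,0) = Q_h + 0, O_(h,1) = 0 + Q_h, Q_0 = K + 0, Q_1 = 0 + K;
   a degree (h1, h2) : G has h2 = outer (gamma) index, h1 = inner (beta) index *)
Definition Ocomp (x : Oct) (h : G) : F * F :=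
  if h.2 then (if h.1 then x.2.2 else x.2.1) else (if h.1 then x.1.2 else x.1.1).

Definition homO (x : Oct) (h : G) : Prop :=
  forall h' : G, h' != h -> Ocomp x h' = (0, 0).

Fixpoint evalO (o : CDops Oct) (phi : nat -> G -> Oct) (t : term F) : Oct :=
  match t with
  | Var i a => phi i a
  | Zero => cd_zero o
  | Add s u => cd_add o (evalO o phi s) (evalO o phi u)
  | Scal c s => cd_scale o c (evalO o phi s)
  | Mul s u => cd_mul o (evalO o phi s) (evalO o phi u)
  end.

Definition graded_eval (phi : nat -> G -> Oct) : Prop :=
  forall i a, homO (phi i a) a.

End Free.

(* The coefficient of f^* at a monomial m is (-1)^(number of leaves of m)
   times the coefficient of f at the mirror image of m, which gives (1).
   For (2) and (4) one shows, by induction on terms of U and simultaneously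
   for every homogeneous component t of degree h, that t^* ≡ -t when h <> 0
   and that t v ≡ v t^* for every homogeneous v whose degree is neither 0
   nor h.  The step for a product is a case analysis on the degrees of the
   factors, using only the identities (ab)v = v(ba), x∘y = 0 and (x,y,z) = 0;
   it needs both statements for t^* as well, so the induction carries them
   for t and t^*.  Then (3) is (2) applied to v and w, and (5) holds because
   octonion conjugation is an anti-automorphism that negates every
   homogeneous element of nonzero degree. *)

From mathcomp Require Import all_boot all_algebra.
From mathcomp Require Import ring.
Set Implicit Arguments. Unset Strict Implicit. Unset Printing Implicit Defensive.
Import GRing.Theory.
Local Open Scope ring_scope.

Lemma gaddC (a b : G) : gadd a b = gadd b a.
Proof. by case: a b => [[] []] [[] []]. Qed.

Lemma gaddg0 (a : G) : gadd a g0 = a.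
Proof. by case: a => [[] []]. Qed.

Lemma gaddK (a b : G) : gadd a (gadd a b) = b.
Proof. by case: a b => [[] []] [[] []]. Qed.

Lemma gaddgg (a : G) : gadd a a = g0.
Proof. by case: a => [[] []]. Qed.

Lemma gadd_eq0 (a b : G) : gadd a b = g0 -> a = b.
Proof. by case: a b => [[] []] [[] []]. Qed.

Lemma gspan_full (a c : G) :
  a != g0 -> c != g0 -> c != a -> forall h : G, h \in gspan [:: a; c].
Proof. by case: a c => [[] []] [[] []] //= _ _ _ [[] []]. Qed.

Lemma size_gspan_g0g0c (c : G) : (size (undup (gspan [:: g0; g0; c])) <= 2)%N.
Proof. by case: c => [[] []]. Qed.

Lemma size_gspan_cg0g0 (c : G) : (size (undup (gspan [:: c; g0; g0])) <= 2)%N.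
Proof. by case: c => [[] []]. Qed.

Fixpoint leaf_sign (F : fieldType) (m : mono) : F :=
  match m with Leaf _ _ => -1 | Node m1 m2 => leaf_sign F m1 * leaf_sign F m2 end.

Fixpoint mirror (m : mono) : mono :=
  match m with Leaf i a => Leaf i a | Node m1 m2 => Node (mirror m2) (mirror m1) end.

Lemma mirrorK : involutive mirror.
Proof. by elim=> [i a|m1 IH1 m2 IH2] //=; rewrite IH1 IH2. Qed.

Lemma deg_mirror m : deg (mirror m) = deg m.
Proof. by elim: m => [i a|m1 IH1 m2 IH2] //=; rewrite IH1 IH2 gaddC. Qed.

Section FreeAlgebra.
Variable F : fieldType.
Implicit Types (s t u p q v w A B : term F) (m : mono).

Local Notation sign := (leaf_sign F).
Local Notation "p ≡ q" := (equivI p q) (at level 70, no associativity).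

Lemma sign_mirror m : sign (mirror m) = sign m.
Proof. by elim: m => [i a|m1 IH1 m2 IH2] //=; rewrite IH1 IH2 mulrC. Qed.

Lemma sign_sqr m : sign m * sign m = 1.
Proof.
elim: m => [i a|m1 IH1 m2 IH2] /=; first by rewrite mulrNN mulr1.
by rewrite mulrACA IH1 IH2 mulr1.
Qed.

Lemma coeff_star t m : coeff (star t) m = sign m * coeff t (mirror m).
Proof.
elim: t m => [i a||s IHs u IHu|c s IHs|s IHs u IHu] [j b|m1 m2] /=;
  rewrite ?mulr0 ?IHs ?IHu //=; ring.
Qed.

Lemma eq_coeff_star t t' : coeff t =1 coeff t' -> coeff (star t) =1 coeff (star t').
Proof. by move=> eq_tt' m; rewrite !coeff_star eq_tt'. Qed.

Lemma starK t : coeff (star (star t)) =1 coeff t.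
Proof. by move=> m; rewrite !coeff_star mirrorK sign_mirror mulrA sign_sqr mul1r. Qed.

Lemma termU_star t : termU t -> termU (star t).
Proof. by elim: t => //= [s IHs u IHu|s IHs u IHu] [Us Uu]; split; auto. Qed.

Lemma star_nontrivial : exists t : term F, termU t /\ exists m, coeff (star t) m <> coeff t m.
Proof.
pose a : G := (true, false).
exists (Mul (Var 0 a) (Var 1 a)); split => //.
exists (Node (Leaf 0 a) (Leaf 1 a)) => /=.
by rewrite !mulr0 mulr1 => /esym/eqP; rewrite oner_eq0.
Qed.

Lemma eq_coeff_Mul p p' q q' : coeff p =1 coeff p' -> coeff q =1 coeff q' ->
  coeff (Mul p q) =1 coeff (Mul p' q').
Proof. by move=> eq_p eq_q [j b|m1 m2] //=; rewrite eq_p eq_q. Qed.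

Lemma homog_Var i a : @homog F (Var i a) a.
Proof. by case=> [j b|//] /=; case: ifP => // /andP[_ /eqP ->]. Qed.

Lemma homog_Mul A B a b : homog A a -> homog B b -> homog (Mul A B) (gadd a b).
Proof.
move=> HA HB [//|m1 m2] /= nz.
by rewrite (HA m1) ?(HB m2) // => z; apply: nz; rewrite z ?mulr0 ?mul0r.
Qed.

Lemma homog_star A a : homog A a -> homog (star A) a.
Proof.
move=> HA m; rewrite coeff_star -deg_mirror => nz; apply: HA => z.
by apply: nz; rewrite z mulr0.
Qed.

Lemma hcomp_homog t a h : homog t a -> h != a -> hcomp t h =1 (fun _ => 0).
Proof.
move=> Ht ha m; rewrite /hcomp; case: eqP => // dm.
by case: (coeff t m =P 0) => // /Ht da; move: ha; rewrite -dm da eqxx.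
Qed.

(** * The ideal [I] *)

Lemma inI_coeff0 t : coeff t =1 (fun _ => 0) -> inI t.
Proof.
move=> t0; have I0 := I_scal 0 (I_gen (gen10 F 0 1)).
by apply: (I_ext _ I0) => m /=; rewrite mul0r t0.
Qed.

Lemma eqv_coeff p q : coeff p =1 coeff q -> p ≡ q.
Proof. by move=> eq_pq; apply: inI_coeff0 => m /=; rewrite eq_pq; ring. Qed.

Lemma eqv_refl p : p ≡ p.
Proof. exact: eqv_coeff. Qed.

Lemma eqv_sym p q : p ≡ q -> q ≡ p.
Proof. by move=> Hpq; apply: (I_ext _ (I_scal (-1) Hpq)) => m /=; ring. Qed.

Lemma eqv_trans p q r : p ≡ q -> q ≡ r -> p ≡ r.
Proof. by move=> Hpq Hqr; apply: (I_ext _ (I_add Hpq Hqr)) => m /=; ring. Qed.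

Lemma eqv_ext p p' q q' :
  coeff p =1 coeff p' -> coeff q =1 coeff q' -> p ≡ q -> p' ≡ q'.
Proof. by move=> eq_p eq_q; apply: I_ext => m /=; rewrite eq_p eq_q. Qed.

Lemma eqvD p q p' q' : p ≡ q -> p' ≡ q' -> Add p p' ≡ Add q q'.
Proof. by move=> H H'; apply: (I_ext _ (I_add H H')) => m /=; ring. Qed.

Lemma eqvZ c p q : p ≡ q -> Scal c p ≡ Scal c q.
Proof. by move=> H; apply: (I_ext _ (I_scal c H)) => m /=; ring. Qed.

Lemma eqvMl s p q : p ≡ q -> Mul s p ≡ Mul s q.
Proof. by move=> H; apply: (I_ext _ (I_mull s H)) => -[j b|m1 m2] /=; ring. Qed.

Lemma eqvMr s p q : p ≡ q -> Mul p s ≡ Mul q s.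
Proof. by move=> H; apply: (I_ext _ (I_mulr s H)) => -[j b|m1 m2] /=; ring. Qed.

Lemma eqv_trans_coeff p q r : p ≡ q -> coeff q =1 coeff r -> p ≡ r.
Proof. by move=> Hpq eq_qr; apply: eqv_trans Hpq (eqv_coeff eq_qr). Qed.

Lemma eqv_coeff_trans p q r : coeff p =1 coeff q -> q ≡ r -> p ≡ r.
Proof. by move=> eq_pq; apply: eqv_trans (eqv_coeff eq_pq). Qed.

Definition subst3 (a0 a1 a2 : G) (A0 A1 A2 : term F) : nat -> G -> term F :=
  fun i a => if (i == 0%N) && (a == a0) then A0 else
             if (i == 1%N) && (a == a1) then A1 else
             if (i == 2%N) && (a == a2) then A2 else Var i a.
Arguments subst3 : simpl never.

Lemma subst3_0 a0 a1 a2 A0 A1 A2 : subst3 a0 a1 a2 A0 A1 A2 0%N a0 = A0.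
Proof. by rewrite /subst3 /= eqxx. Qed.

Lemma subst3_1 a0 a1 a2 A0 A1 A2 : subst3 a0 a1 a2 A0 A1 A2 1%N a1 = A1.
Proof. by rewrite /subst3 /= eqxx. Qed.

Lemma subst3_2 a0 a1 a2 A0 A1 A2 : subst3 a0 a1 a2 A0 A1 A2 2%N a2 = A2.
Proof. by rewrite /subst3 /= eqxx. Qed.

Lemma graded_subst3 a0 a1 a2 A0 A1 A2 :
  homog A0 a0 -> homog A1 a1 -> homog A2 a2 -> graded_subst (subst3 a0 a1 a2 A0 A1 A2).
Proof.
move=> H0 H1 H2 i a; rewrite /subst3.
by do ![case: ifP => [/andP[_ /eqP->] //|_]]; apply: homog_Var.
Qed.

Lemma eqv_gen1 A B V a c : c != g0 -> a != g0 ->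
  homog A a -> homog B a -> homog V c -> Mul (Mul A B) V ≡ Mul V (Mul B A).
Proof.
move=> cn an HA HB HV.
have := I_subst (graded_subst3 HA HB HV) (I_gen (gen1 F 2 0 1 cn an)).
by rewrite /= subst3_0 subst3_1 subst3_2.
Qed.

Lemma eqv_anticomm A V a c : (forall h : G, h \in gspan [:: a; c]) ->
  homog A a -> homog V c -> Mul A V ≡ Opp (Mul V A).
Proof.
move=> span_ac HA HV.
have := I_subst (graded_subst3 HA HV HV) (I_gen (gen4 F 0 1 span_ac)).
by rewrite /= subst3_0 subst3_1; apply: I_ext => -[j b|m1 m2] /=; ring.
Qed.

Lemma eqv_assoc A B C a b c : (size (undup (gspan [:: a; b; c])) <= 2)%N ->
  homog A a -> homog B b -> homog C c -> Mul (Mul A B) C ≡ Mul A (Mul B C).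
Proof.
move=> span_abc HA HB HC.
have := I_subst (graded_subst3 HA HB HC) (I_gen (gen9 F 0 1 2 span_abc)).
by rewrite /= subst3_0 subst3_1 subst3_2; apply: I_ext => -[j x|m1 m2] /=; ring.
Qed.

(** * Homogeneous components as terms *)

Definition hsum (f : G -> term F) : term F :=
  Add (Add (f (false, false)) (f (true, false))) (Add (f (false, true)) (f (true, true))).

Fixpoint hproj t h : term F :=
  match t with
  | Var i a => if a == h then Var i a else Zero
  | Zero => Zero
  | Add s u => Add (hproj s h) (hproj u h)
  | Scal c s => Scal c (hproj s h)
  | Mul s u => hsum (fun k => Mul (hproj s k) (hproj u (gadd k h)))
  end.

Lemma coeff_hproj t h : coeff (hproj t h) =1 hcomp t h.
Proof.
rewrite /hcomp; elim: t h => [i a||s IHs u IHu|c s IHs|s IHs u IHu] h [j b|m1 m2] /=.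
- case: (a =P h) => [<-|/eqP ah] /=.
    by case: (b =P a) => [->|/eqP ba]; rewrite ?eqxx // [a == b]eq_sym (negPf ba) andbF.
  by case: (b =P h) => [->|//]; rewrite (negPf ah) andbF.
- by case: ifP; case: ifP.
- by case: ifP.
- by case: ifP.
- by rewrite IHs IHu; case: ifP; rewrite ?addr0.
- by rewrite IHs IHu; case: ifP; rewrite ?addr0.
- by rewrite IHs; case: ifP; rewrite ?mulr0.
- by rewrite IHs; case: ifP; rewrite ?mulr0.
- by rewrite !addr0; case: ifP.
- rewrite !IHs !IHu; move: (deg m1) (deg m2) h => [[] []] [[] []] [[] []] /=;
    rewrite ?(mul0r, mulr0, add0r, addr0) //.
Qed.

Lemma hsum_hproj t : coeff (hsum (hproj t)) =1 coeff t.
Proof.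
move=> m; rewrite /= !coeff_hproj /hcomp.
by case: (deg m) => [[] []] /=; rewrite ?(add0r, addr0).
Qed.

Lemma homog_hproj t h : homog (hproj t h) h.
Proof. by move=> m; rewrite coeff_hproj /hcomp; case: eqP. Qed.

Lemma eqv_hsum f f' : (forall k, f k ≡ f' k) -> hsum f ≡ hsum f'.
Proof. by move=> eq_f; do ![apply: eqvD]. Qed.

(** * The star rules for homogeneous elements *)

Definition star_skew h t := h != g0 -> star t ≡ Opp t.

Definition star_swap h t :=
  forall v c, homog v c -> c != g0 -> c != h -> Mul t v ≡ Mul v (star t).

Definition star_rules h t := star_skew h t /\ star_swap h t.

Definition star_rules2 h t := star_rules h t /\ star_rules h (star t).

Lemma star_rules_ext h t t' : coeff t =1 coeff t' -> star_rules h t -> star_rules h t'.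
Proof.
move=> eq_t [skew swap]; split=> [hn|v c Hv cn ch].
  by apply: eqv_ext (skew hn); [apply: eq_coeff_star | move=> m /=; rewrite eq_t].
apply: eqv_ext (swap v c Hv cn ch); first exact: eq_coeff_Mul.
exact/eq_coeff_Mul/eq_coeff_star.
Qed.

Lemma star_rules_add h t u : star_rules h t -> star_rules h u -> star_rules h (Add t u).
Proof.
move=> [skew_t swap_t] [skew_u swap_u]; split=> [hn|v c Hv cn ch].
  by apply: eqv_ext (eqvD (skew_t hn) (skew_u hn)) => // m /=; ring.
by apply: eqv_ext (eqvD (swap_t v c Hv cn ch) (swap_u v c Hv cn ch)) => -[j b|m1 m2] /=; ring.
Qed.

Lemma star_rules_scal h c t : star_rules h t -> star_rules h (Scal c t).
Proof.
move=> [skew swap]; split=> [hn|v d Hv dn dh].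
  by apply: eqv_ext (eqvZ c (skew hn)) => // m /=; ring.
by apply: eqv_ext (eqvZ c (swap v d Hv dn dh)) => -[j b|m1 m2] /=; ring.
Qed.

Lemma star_coeff0 t : coeff t =1 (fun _ => 0) -> star t ≡ Opp t.
Proof. by move=> t0; apply: eqv_coeff => m; rewrite coeff_star /= !t0; ring. Qed.

Lemma swap_coeff0 t v : coeff t =1 (fun _ => 0) -> Mul t v ≡ Mul v (star t).
Proof.
by move=> t0; apply: eqv_coeff => -[j k|m1 m2] /=; rewrite ?coeff_star ?t0; ring.
Qed.

Lemma star_rules_coeff0 h t : coeff t =1 (fun _ => 0) -> star_rules h t.
Proof. by move=> t0; split=> [_|v c _ _ _]; [apply: star_coeff0 | apply: swap_coeff0]. Qed.

Lemma star_rules2_add h t u : star_rules2 h t -> star_rules2 h u -> star_rules2 h (Add t u).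
Proof. by move=> [Rt Rst] [Ru Rsu]; split; apply: star_rules_add. Qed.

Lemma star_rules2_scal h c t : star_rules2 h t -> star_rules2 h (Scal c t).
Proof. by move=> [Rt Rst]; split; apply: star_rules_scal. Qed.

Lemma star_rules2_coeff0 h t : coeff t =1 (fun _ => 0) -> star_rules2 h t.
Proof.
move=> t0; split; apply: star_rules_coeff0 => // m.
by rewrite coeff_star t0 mulr0.
Qed.

Lemma star_rules2_star h t : star_rules2 h t -> star_rules2 h (star t).
Proof. by move=> [Rt Rst]; split=> //; apply: star_rules_ext Rt => m; rewrite starK. Qed.

Lemma star_rules2_Var i a : a != g0 -> star_rules2 a (Var i a).
Proof.
move=> an; suff R : star_rules a (Var i a) by split=> //; apply: star_rules_scal.
split=> [_|v c Hv cn ca]; first exact: eqv_refl.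
apply: eqv_trans_coeff (eqv_anticomm (gspan_full an cn ca) (@homog_Var i a) Hv) _.
by case=> [j k|m1 m2] /=; ring.
Qed.

Section Product.
Variables (A B : term F) (a b : G).
Hypotheses (HA : homog A a) (HB : homog B b).
Hypotheses (RA : star_rules2 a A) (RB : star_rules2 b B).

Lemma star_skew_Mul : star_skew (gadd a b) (Mul A B).
Proof.
move: RA RB => [[skewA swapA] [_ swap_sA]] [[skewB swapB] [_ swap_sB]] ab_n /=.
case: (eqVneq a g0) => [a0|an]; case: (eqVneq b g0) => [b0|bn].
- by move: ab_n; rewrite a0 b0 gaddg0 eqxx.
- have ba : b != a by rewrite a0.
  apply: eqv_trans (eqvMr _ (skewB bn)) _.
  apply: eqv_coeff_trans (eqvZ (-1) (eqv_sym (swapA B b HB bn ba))).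
  by case=> [j k|m1 m2] /=; ring.
- have ab : a != b by rewrite b0.
  apply: eqv_trans (eqvMl _ (skewA an)) _.
  apply: eqv_coeff_trans (eqv_trans_coeff (eqvZ (-1) (swap_sB A a HA an ab)) _);
    by case=> [j k|m1 m2] /=; rewrite ?starK; ring.
- have ab : a != b by apply: contraNneq ab_n => ->; rewrite gaddgg.
  apply: eqv_trans (eqvMl _ (skewA an)) _; apply: eqv_trans (eqvMr _ (skewB bn)) _.
  apply: eqv_coeff_trans (eqv_anticomm (gspan_full bn an ab) HB HA).
  by case=> [j k|m1 m2] /=; ring.
Qed.

Lemma star_swap_Mul : star_swap (gadd a b) (Mul A B).
Proof.
move: RA RB => [[skewA swapA] _] [[skewB swapB] _] v c Hv cn cd.
case: (eqVneq (gadd a b) g0) => [/gadd_eq0 eq_ab|dn]; last first.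
  apply: eqv_trans (eqv_anticomm (gspan_full dn cn cd) (homog_Mul HA HB) Hv) _.
  apply: eqv_coeff_trans (eqvMl v (eqv_sym (star_skew_Mul dn))).
  by case=> [j k|m1 m2] /=; ring.
subst b; case: (eqVneq a g0) => [a0|an].
  subst a; have HvsB : homog (Mul v (star B)) c.
    by rewrite -[c]gaddg0; apply: homog_Mul (homog_star HB).
  apply: eqv_trans (eqv_assoc (size_gspan_g0g0c c) HA HB Hv) _.
  apply: eqv_trans (eqvMl A (swapB v c Hv cn cn)) _.
  apply: eqv_trans (swapA _ c HvsB cn cn) _.
  exact: eqv_assoc (size_gspan_cg0g0 c) Hv (homog_star HB) (homog_star HA).
apply: eqv_trans (eqv_gen1 cn an HA HB Hv) _; apply: eqvMl; apply: eqv_sym => /=.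
apply: eqv_trans (eqvMl _ (skewA an)) _; apply: eqv_trans_coeff (eqvMr _ (skewB an)) _.
by case=> [j k|m1 m2] /=; ring.
Qed.

End Product.

Lemma star_rules2_Mul A B a b h : homog A a -> homog B b ->
  star_rules2 a A -> star_rules2 b B -> gadd a b = h -> star_rules2 h (Mul A B).
Proof.
move=> HA HB RA RB <-; split; first by split; [apply: star_skew_Mul | apply: star_swap_Mul].
have [HsA HsB] := (homog_star HA, homog_star HB).
have [RsA RsB] := (star_rules2_star RA, star_rules2_star RB).
by rewrite /= gaddC; split; [apply: star_skew_Mul | apply: star_swap_Mul].
Qed.

Lemma star_rules2_hsum h f : (forall k, star_rules2 h (f k)) -> star_rules2 h (hsum f).
Proof. by move=> Rf; do ![apply: star_rules2_add]. Qed.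

Lemma star_rules2_hproj t : termU t -> forall h, star_rules2 h (hproj t h).
Proof.
elim: t => [i a||s IHs u IHu|c s IHs|s IHs u IHu] Ut h.
- by rewrite /=; case: eqP => [<-|_]; [apply: star_rules2_Var | apply: star_rules2_coeff0].
- exact: star_rules2_coeff0.
- by case: Ut => Us Uu; apply: star_rules2_add; [apply: IHs | apply: IHu].
- exact: star_rules2_scal (IHs Ut h).
- case: Ut => Us Uu; apply: star_rules2_hsum => k.
  exact: star_rules2_Mul (@homog_hproj s k) (@homog_hproj u _) (IHs Us k) (IHu Uu _) (gaddK k h).
Qed.

Lemma star_eqv_opp t : termU t -> hcomp t g0 =1 (fun _ => 0) -> star t ≡ Opp t.
Proof.
move=> Ut t_0.
have skew h : star (hproj t h) ≡ Opp (hproj t h).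
  case: (eqVneq h g0) => [->|hn]; last exact: (star_rules2_hproj Ut h).1.1.
  by apply: star_coeff0 => m; rewrite coeff_hproj t_0.
apply: eqv_ext (eqv_hsum skew); first exact: eq_coeff_star (hsum_hproj t).
by move=> m /=; rewrite -(hsum_hproj t m) /=; ring.
Qed.

Lemma star_Mul_homog t v w h : termU v -> termU w -> homog v h -> homog w h ->
  h != g0 -> coeff t =1 coeff (Mul v w) -> star t ≡ Mul w v.
Proof.
move=> Uv Uw Hv Hw hn eq_t.
have skew u : termU u -> homog u h -> star u ≡ Opp u.
  by move=> Uu Hu; apply: star_eqv_opp Uu (hcomp_homog Hu _); rewrite eq_sym.
apply: eqv_coeff_trans (eq_coeff_star eq_t) _ => /=.
apply: eqv_trans (eqvMl _ (skew v Uv Hv)) _.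
apply: eqv_trans_coeff (eqvMr _ (skew w Uw Hw)) _.
by case=> [j k|m1 m2] /=; ring.
Qed.

Lemma mul_Var_eqv t i a : termU t -> a != g0 -> hcomp t a =1 (fun _ => 0) ->
  Mul t (Var i a) ≡ Mul (Var i a) (star t).
Proof.
move=> Ut an t_a.
have swap h : Mul (hproj t h) (Var i a) ≡ Mul (Var i a) (star (hproj t h)).
  case: (eqVneq h a) => [->|ha].
    by apply: swap_coeff0 => m; rewrite coeff_hproj t_a.
  by apply: (star_rules2_hproj Ut h).1.2 (@homog_Var i a) an _; rewrite eq_sym.
apply: eqv_ext (eqv_hsum swap).
  by case=> [j k|m1 m2] /=; rewrite -?(hsum_hproj t m1) /=; ring.
case=> [j k|m1 m2] /=; rewrite -?(eq_coeff_star (hsum_hproj t) m2) /=; ring.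
Qed.

End FreeAlgebra.

(** * Octonion conjugation *)

Lemma evalO_star_conj (F : fieldType) (o : CDops F (Oct F)) phi (t : term F) :
  (forall x y, cd_conj o (cd_mul o x y) = cd_mul o (cd_conj o y) (cd_conj o x)) ->
  (forall x y, cd_conj o (cd_add o x y) = cd_add o (cd_conj o x) (cd_conj o y)) ->
  (forall c x, cd_conj o (cd_scale o c x) = cd_scale o c (cd_conj o x)) ->
  cd_conj o (cd_zero o) = cd_zero o ->
  (forall i a, a != g0 -> cd_conj o (phi i a) = cd_scale o (-1) (phi i a)) ->
  termU t -> evalO o phi (star t) = cd_conj o (evalO o phi t).
Proof.
move=> conjM conjD conjZ conj0 conj_phi.
elim: t => [i a||s IHs u IHu|c s IHs|s IHs u IHu] /= Ut.
- by rewrite conj_phi.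
- by rewrite conj0.
- by case: Ut => Us Uu; rewrite IHs // IHu // conjD.
- by rewrite IHs // conjZ.
- by case: Ut => Us Uu; rewrite IHs // IHu // conjM.
Qed.

Section Octonions.
Variables (F : fieldType) (mu beta gamma : F).
Local Notation O := (Oops mu beta gamma).

Local Ltac oct_ring := congr (((_, _), (_, _)), ((_, _), (_, _))); ring.

Lemma Oconj_mul (x y : Oct F) :
  cd_conj O (cd_mul O x y) = cd_mul O (cd_conj O y) (cd_conj O x).
Proof.
move: x y => [[[x1 x2] [x3 x4]] [[x5 x6] [x7 x8]]] [[[y1 y2] [y3 y4]] [[y5 y6] [y7 y8]]] /=.
oct_ring.
Qed.

Lemma Oconj_add (x y : Oct F) :
  cd_conj O (cd_add O x y) = cd_add O (cd_conj O x) (cd_conj O y).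
Proof.
move: x y => [[[x1 x2] [x3 x4]] [[x5 x6] [x7 x8]]] [[[y1 y2] [y3 y4]] [[y5 y6] [y7 y8]]] /=.
oct_ring.
Qed.

Lemma Oconj_scale c (x : Oct F) : cd_conj O (cd_scale O c x) = cd_scale O c (cd_conj O x).
Proof. move: x => [[[x1 x2] [x3 x4]] [[x5 x6] [x7 x8]]] /=; oct_ring. Qed.

Lemma Oconj_zero : cd_conj O (cd_zero O) = cd_zero O.
Proof. rewrite /=; oct_ring. Qed.

(* A homogeneous element of nonzero degree has no component in K(mu),
   and Cayley--Dickson conjugation negates the other components. *)
Lemma Oconj_homog (x : Oct F) a : homO x a -> a != g0 -> cd_conj O x = cd_scale O (-1) x.
Proof.
move=> Hx an; have := Hx g0; rewrite eq_sym => /(_ an).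
rewrite /Ocomp /=; move: x {Hx} => [[[x1 x2] [x3 x4]] [[x5 x6] [x7 x8]]] /= [-> ->].
oct_ring.
Qed.

Lemma evalO_star phi (t : term F) : graded_eval phi -> termU t ->
  evalO O phi (star t) = cd_conj O (evalO O phi t).
Proof.
move=> Hphi; apply: evalO_star_conj.
- exact: Oconj_mul.
- exact: Oconj_add.
- exact: Oconj_scale.
- exact: Oconj_zero.
- by move=> i a; apply: Oconj_homog.
Qed.

End Octonions.

Theorem mainTheorem7 (F : fieldType) :
  (* (1) * is an involution (anti-automorphism of order 2) of U *)
  ((forall f g : term F, termU f -> termU g -> coeff f =1 coeff g ->
       coeff (star f) =1 coeff (star g))
   /\ (forall f : term F, termU f -> termU (star f))
   /\ (forall (f g : term F) (c : F), termU f -> termU g ->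
       coeff (star (Add f (Scal c g))) =1 coeff (Add (star f) (Scal c (star g))))
   /\ (forall f g : term F, termU f -> termU g ->
       coeff (star (Mul f g)) =1 coeff (Mul (star g) (star f)))
   /\ (forall f : term F, termU f -> coeff (star (star f)) =1 coeff f)
   /\ (exists f : term F, termU f /\ exists m, coeff (star f) m <> coeff f m))
  (* (2) *)
  /\ (forall f : term F, termU f -> hcomp f g0 =1 (fun _ => 0) ->
        equivI (star f) (Opp f))
  (* (3) *)
  /\ (forall (f v w : term F) (h : G), termU f -> termU v -> termU w ->
        homog v h -> homog w h -> h != g0 ->
        coeff f =1 coeff (Mul v w) ->
        equivI (star f) (Mul w v))
  (* (4) *)
  /\ (forall (f : term F) (i : nat) (a : G), termU f -> a != g0 ->
        hcomp f a =1 (fun _ => 0) ->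
        equivI (Mul f (Var i a)) (Mul (Var i a) (star f)))
  (* (5) *)
  /\ (forall f : term F, termU f ->
        forall mu beta gamma : F,
          4%:R * mu + 1 != 0 -> beta != 0 -> gamma != 0 ->
          forall phi : nat -> G -> Oct F, graded_eval phi ->
            evalO (Oops mu beta gamma) phi (star f)
            = cd_conj (Oops mu beta gamma) (evalO (Oops mu beta gamma) phi f)).
Proof.
split; [|split; [|split; [|split]]].
- do !split=> //.
  + by move=> f g _ _; apply: eq_coeff_star.
  + exact: termU_star.
  + by move=> f _; apply: starK.
  + exact: star_nontrivial.
- exact: star_eqv_opp.
- by move=> f v w h _; apply: star_Mul_homog.
- by move=> f i a; apply: mul_Var_eqv.
- by move=> f Uf mu beta gamma _ _ _ phi Hphi; apply: evalO_star.
Qed.
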